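(* Let $f\in\mathbb{C}[h]$, $\lambda\in S_f$ with $|\lambda|=m\neq 0$, $\dot z\in\mathbb{C}$ and $a\in\mathbb{C}^*$. Then the $m$-dimensional $\mathcal{H}(f)$-modules $A'_{\mathcal{H}(f)}(\lambda,\dot z,a)$ and $B'_{\mathcal{H}(f)}(\lambda,\dot z,a)$ are simple.
   Context: For $f(h)\in\mathbb{C}[h]$, $\mathcal{H}(f)$ is the unital associative $\mathbb{C}$-algebra generated by $x,y,h$ with relations $hx=xf(h)$, $yh=f(h)y$, $yx-xy=f(h)-h$. $S_f$ is the set of maps $\lambda:\mathbb{Z}\to\mathbb{C}$ with $f(\lambda(i))=\lambda(i+1)$ for all $i$; $|\lambda|$ is the nonnegative generator of the subgroup $\{m\in\mathbb{Z}\mid\lambda(i+m)=\lambda(i)\ \forall i\}$. For $\lambda\in S_f$, $\dot z\in\mathbb{C}$: $A_{\mathcal{H}(f)}(\lambda,\dot z)$ is $\mathbb{C}[t,t^{-1}]$ with $ht^i=\lambda(i)t^i$, $xt^i=t^{i+1}$, $yt^i=(\lambda(i)+\dot z)t^{i-1}$; $B_{\mathcal{H}(f)}(\lambda,\dot z)$ is $\mathbb{C}[t,t^{-1}]$ with $ht^i=\lambda(i)t^i$, $xt^i=(\lambda(i+1)+\dot z)t^{i+1}$, $yt^i=t^{i-1}$. These are $\mathcal{H}(f)$-modules, and when $|\lambda|=m\ne0$ and $a\in\mathbb{C}^*$, $\mathbb{C}[t,t^{-1}](t^m-a)$ is a submodule of each; set $A'_{\mathcal{H}(f)}(\lambda,\dot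 z,a)=A_{\mathcal{H}(f)}(\lambda,\dot z)/\mathbb{C}[t,t^{-1}](t^m-a)$ and $B'_{\mathcal{H}(f)}(\lambda,\dot z,a)=B_{\mathcal{H}(f)}(\lambda,\dot z)/\mathbb{C}[t,t^{-1}](t^m-a)$. *)

(* The base field C is an arbitrary numClosedFieldType
   (MathComp's abstraction of the complex numbers). *)
From HB Require Import structures.
From mathcomp Require Import all_boot all_order all_algebra.
Set Implicit Arguments. Unset Strict Implicit. Unset Printing Implicit Defensive.
Import Order.TTheory GRing.Theory Num.Theory.
Local Open Scope ring_scope.

Section Hf.
Variable C : numClosedFieldType.

(* Laurent polynomials C[t,t^-1]: coefficient functions int -> C
   (c i = coefficient of t^i) with finite support. *)
Definition laurent := int -> C.
Definition finsupp (c : laurent) : Prop :=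
  exists N : nat, forall i : int, (N < `|i|)%N -> c i = 0.

Definition in_Sf (f : {poly C}) (lam : int -> C) : Prop :=
  forall i : int, f.[lam i] = lam (i + 1).

(* |lambda| = m : m is the nonnegative generator of the group of periods *)
Definition lam_period (lam : int -> C) (m : nat) : Prop :=
  forall k : int, (forall i : int, lam (i + k) = lam i) <-> (m%:Z %| k)%Z.

Record Hact := mkHact { act_x : laurent -> laurent;
                        act_y : laurent -> laurent;
                        act_h : laurent -> laurent }.

(* A(lambda, zd):  h t^i = lam i t^i, x t^i = t^(i+1),
   y t^i = (lam i + zd) t^(i-1), written on coefficient functions *)
Definition A_act (lam : int -> C) (zd : C) : Hact :=
  mkHact (fun c i => c (i - 1))
         (fun c i => (lam (i + 1) + zd) * c (i + 1))
         (fun c i => lam i * c i).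

(* B(lambda, zd):  h t^i = lam i t^i, x t^i = (lam (i+1) + zd) t^(i+1),
   y t^i = t^(i-1) *)
Definition B_act (lam : int -> C) (zd : C) : Hact :=
  mkHact (fun c i => (lam i + zd) * c (i - 1))
         (fun c i => c (i + 1))
         (fun c i => lam i * c i).

(* the submodule C[t,t^-1](t^m - a) *)
Definition ideal_tma (m : nat) (a : C) (c : laurent) : Prop :=
  exists g : laurent, finsupp g /\
    forall i : int, c i = g (i - m%:Z) - a * g i.

(* Submodules of the quotient module L/N (L = C[t,t^-1] with action M),
   presented as predicates on representatives that are invariant under
   the equivalence u ~ v <-> u - v in N. *)
Definition qsubmodule (M : Hact) (N : laurent -> Prop) (S : laurent -> Prop)
  : Prop :=
  (forall u, S u -> finsupp u) /\
  [/\ S (fun _ => 0),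
      forall u v, S u -> S v -> S (fun j => u j + v j),
      forall (k : C) u, S u -> S (fun j => k * u j),
      forall u, S u -> [/\ S (act_x M u), S (act_y M u) & S (act_h M u)]
    & forall u v, finsupp v -> N (fun j => u j - v j) -> S u -> S v].

Definition qsimple (M : Hact) (N : laurent -> Prop) : Prop :=
  (exists u, finsupp u /\ ~ N u) /\
  forall S, qsubmodule M N S ->
    (forall u, S u -> N u) \/ (forall u, finsupp u -> S u).

Definition qdim (N : laurent -> Prop) (m : nat) : Prop :=
  exists b : 'I_m -> laurent,
    [/\ forall i, finsupp (b i),
        forall u, finsupp u -> exists k : 'I_m -> C,
           N (fun j => u j - \sum_(i < m) k i * b i j)
      & forall k : 'I_m -> C, N (fun j => \sum_(i < m) k i * b i j) ->
           forall i, k i = 0].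

End Hf.

From HB Require Import structures.
From mathcomp Require Import all_boot all_order all_algebra zify ring.
From Stdlib Require Import FunctionalExtensionality Classical.
Set Implicit Arguments. Unset Strict Implicit. Unset Printing Implicit Defensive.
Import Order.TTheory GRing.Theory Num.Theory.
Local Open Scope ring_scope.

(* Write N for the submodule C[t,t^-1](t^m - a) and t^i (tpow i) for the
   monomials.  The argument has three parts.
   1. The quotient L/N.  An element of N vanishing outside the window
      [0, m) is zero (its cofactor obeys a geometric recursion along
      progressions of step m and has finite support).  Since t^(i+m) = a t^i
      modulo N, the classes of t^0, ..., t^(m-1) span L/N, so they form a
      basis and dim L/N = m.
   2. Weights.  The values lam 0, ..., lam (m-1) are pairwise distinct: a
      coincidence lam i = lam j propagates through f to a period j - i < m.
   3. Simplicity.  h acts diagonally with these distinct weights, so a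
      submodule containing a nonzero class contains some t^j (Lagrange
      interpolation in h).  In A, x maps t^j to t^(j+1); in B, y maps t^j
      to t^(j-1); together with t^(i+m) = a t^i this yields every t^i,
      hence the whole quotient. *)

Section Laurent.
Context {C : numClosedFieldType}.

Definition tpow (i : int) : laurent C := fun l => if l == i then 1 else 0.

Lemma laurent_ext (P : laurent C -> Prop) (u v : laurent C) :
  P u -> (forall j, u j = v j) -> P v.
Proof. by move=> Pu uv; rewrite -(functional_extensionality _ _ uv). Qed.

Lemma finsupp_tpow i : finsupp (tpow i).
Proof. by exists `|i|%N => l Hl; rewrite /tpow; case: eqP => // E; lia. Qed.

Lemma finsupp0 : finsupp (fun _ : int => 0 : C).
Proof. by exists 0%N. Qed.

Lemma finsupp_add (u v : laurent C) :
  finsupp u -> finsupp v -> finsupp (fun j => u j + v j).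
Proof.
move=> [N1 H1] [N2 H2]; exists (maxn N1 N2) => i Hi.
by rewrite H1 ?H2 ?addr0 //; lia.
Qed.

Lemma finsupp_scale k (u : laurent C) : finsupp u -> finsupp (fun j => k * u j).
Proof. by move=> [N1 H1]; exists N1 => i Hi; rewrite H1 // mulr0. Qed.

Lemma geometric_decay (c : C) (h : nat -> C) (K : nat) :
  (forall n, (K < n)%N -> h n = 0) -> (forall n, h n = c * h n.+1) ->
  h 0%N = 0.
Proof.
move=> hK hrec.
have pow_n n : h 0%N = c ^+ n * h n.
  by elim: n => [|n IH]; rewrite ?expr0 ?mul1r // IH hrec exprSr mulrA.
by rewrite (pow_n K.+1) hK ?mulr0.
Qed.

End Laurent.

Section Periodic.
Variable m : nat.

Definition periodic (P : int -> Prop) := forall i, P i <-> P (i + m%:Z).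

Lemma periodic_shift P : periodic P -> forall i (q : int), P i <-> P (i + q * m%:Z).
Proof.
move=> Pper.
have Hn (n : nat) i : P i <-> P (i + n%:Z * m%:Z).
  elim: n i => [|n IH] i; first by rewrite mul0r addr0.
  by rewrite IH Pper; have -> : i + n%:Z * m%:Z + m%:Z = i + n.+1%:Z * m%:Z by nia.
move=> i [n|n]; first exact: Hn.
rewrite (Hn n.+1 (i + Negz n * m%:Z)).
by have -> : i + Negz n * m%:Z + n.+1%:Z * m%:Z = i by rewrite NegzE; nia.
Qed.

Hypothesis m0 : m <> 0%N.

Lemma periodic_from_window P : periodic P ->
  (forall r, 0 <= r -> r < m%:Z -> P r) -> forall i, P i.
Proof.
move=> Pper Pwin i; rewrite (divz_eq i m%:Z) addrC -periodic_shift //.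
by apply: Pwin; [apply: modz_ge0 | apply: ltz_pmod]; lia.
Qed.

Lemma periodic_from_above P (j : int) : periodic P ->
  (forall k, j <= k -> P k) -> forall i, P i.
Proof.
move=> Pper Pup i; rewrite (periodic_shift Pper i (`|i| + `|j|)%N%:Z); apply: Pup.
have : (`|i| + `|j|)%N%:Z <= (`|i| + `|j|)%N%:Z * m%:Z by rewrite ler_peMr //; lia.
lia.
Qed.

Lemma periodic_from_below P (j : int) : periodic P ->
  (forall k, k <= j -> P k) -> forall i, P i.
Proof.
move=> Pper Pdown i.
rewrite (periodic_shift Pper i (- (`|i| + `|j|)%N%:Z)); apply: Pdown.
have : (`|i| + `|j|)%N%:Z <= (`|i| + `|j|)%N%:Z * m%:Z by rewrite ler_peMr //; lia.
rewrite mulNr; lia.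
Qed.

End Periodic.

Section Quotient.
Variables (C : numClosedFieldType) (m : nat) (a : C).

Notation N := (ideal_tma m a).

Lemma ideal0 : N (fun _ => 0).
Proof. by exists (fun _ => 0); split; [exact: finsupp0 | move=> i; ring]. Qed.

Lemma ideal_add u v : N u -> N v -> N (fun j => u j + v j).
Proof.
move=> [g1 [g1f H1]] [g2 [g2f H2]]; exists (fun j => g1 j + g2 j).
by split; [exact: finsupp_add | move=> i; rewrite H1 H2; ring].
Qed.

Lemma ideal_scale k u : N u -> N (fun j => k * u j).
Proof.
move=> [g [gf H]]; exists (fun j => k * g j).
by split; [exact: finsupp_scale | move=> i; rewrite H; ring].
Qed.

Lemma ideal_binomial i : N (fun l => tpow (i + m%:Z) l - a * tpow i l).
Proof.
exists (tpow i); split=> [|l]; first exact: finsupp_tpow.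
by rewrite /tpow; congr (_ - _); congr (if _ then _ else _); apply/eqP/eqP; lia.
Qed.

(* Subspaces of L that are unions of classes modulo N, i.e. preimages of
   subspaces of L/N. *)
Definition saturated (P : laurent C -> Prop) :=
  [/\ forall u v, P u -> P v -> P (fun j => u j + v j),
      forall k u, P u -> P (fun j => k * u j)
    & forall u v, P u -> finsupp v -> N (fun j => u j - v j) -> P v].

Lemma saturated_all P : saturated P -> (forall i, P (tpow i)) ->
  forall u, finsupp u -> P u.
Proof.
move=> [Padd Pscale _] Ptpow u [K]; elim: K u => [|K IH] u Hu.
  apply: laurent_ext (Pscale (u 0) _ (Ptpow 0)) _ => j.
  by rewrite /tpow; case: eqP => [->|Hj]; [rewrite mulr1 | rewrite mulr0 Hu //; lia].
pose u' j := if (j == K.+1%:Z) || (j == - K.+1%:Z) then 0 else u j.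
have Pu' : P u'.
  apply: IH => i Hi; rewrite /u'.
  by case: eqP => [//|?]; case: eqP => [//|?]; apply: Hu; lia.
apply: laurent_ext (Padd _ _ Pu' (Padd _ _ (Pscale (u K.+1%:Z) _ (Ptpow K.+1%:Z))
                                 (Pscale (u (- K.+1%:Z)) _ (Ptpow (- K.+1%:Z))))) _.
move=> j; rewrite /u' /tpow.
case: (eqVneq j K.+1%:Z) => [->|H1] /=; first by rewrite mulr1 mulr0; ring.
case: (eqVneq j (- K.+1%:Z)) => [->|H2] /=; first by rewrite mulr1 mulr0; ring.
by rewrite !mulr0; ring.
Qed.

Definition combo (k : 'I_m -> C) : laurent C :=
  fun j => \sum_(i < m) k i * tpow i%:Z j.

Lemma ord_int_eq (i j : 'I_m) : (i%:Z == j%:Z) = (i == j).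
Proof. by rewrite eqz_nat. Qed.

Lemma combo_at k (n : 'I_m) : combo k n%:Z = k n.
Proof.
rewrite /combo (bigD1 n) //= /tpow eqxx mulr1 big1 ?addr0 // => i ni.
by rewrite ord_int_eq eq_sym (negbTE ni) mulr0.
Qed.

Lemma combo_out k x : (forall n : 'I_m, x != n%:Z) -> combo k x = 0.
Proof. by move=> Hx; rewrite /combo big1 // => i _; rewrite /tpow (negbTE (Hx i)) mulr0. Qed.

Lemma window_cases (x : int) :
  (exists n : 'I_m, x = n%:Z) \/ (forall n : 'I_m, x != n%:Z).
Proof.
case: x => [n|n]; last by right=> i; rewrite NegzE; apply/eqP; lia.
case: (ltnP n m) => Hn; first by left; exists (Ordinal Hn).
by right=> i; apply/eqP => -[E]; move: (ltn_ord i); rewrite -E; lia.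
Qed.

Lemma combo_outside k l : l < 0 \/ m%:Z <= l -> combo k l = 0.
Proof. by move=> Hl; apply: combo_out => n; apply/eqP => E; move: (ltn_ord n) Hl; lia. Qed.

Lemma finsupp_combo k : finsupp (combo k).
Proof. by exists m => i Hi; apply: combo_outside; lia. Qed.

Definition spanned (u : laurent C) := exists k, N (fun j => u j - combo k j).

Lemma saturated_spanned : saturated spanned.
Proof.
split.
- move=> u v [k1 H1] [k2 H2]; exists (fun i => k1 i + k2 i).
  apply: laurent_ext (ideal_add H1 H2) _ => j.
  rewrite /combo; under [X in _ = _ - X]eq_bigr => i _ do rewrite mulrDl.
  by rewrite big_split /=; ring.
- move=> c u [k H]; exists (fun i => c * k i).
  apply: laurent_ext (ideal_scale c H) _ => j.
  by rewrite /combo mulrBr mulr_sumr; congr (_ - _); apply: eq_bigr => i _; ring.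
- move=> u v [k H] _ uv; exists k.
  by apply: laurent_ext (ideal_add (ideal_scale (-1) uv) H) _ => j; ring.
Qed.

Hypothesis m0 : m <> 0%N.
Hypothesis a0 : a != 0.

Lemma ideal_window_zero v : N v ->
  (forall l, l < 0 \/ m%:Z <= l -> v l = 0) -> forall l, v l = 0.
Proof.
move=> [g [[K gK] vg]] vout.
have g_up i : 0 <= i -> g i = a * g (i + m%:Z).
  move=> i0; have Hl : m%:Z <= i + m%:Z by lia.
  by move: (vout _ (or_intror Hl)); rewrite vg addrK => /eqP; rewrite subr_eq0 => /eqP.
have g_down i : i < 0 -> g i = a^-1 * g (i - m%:Z).
  move=> i0; move: (vout _ (or_introl i0)); rewrite vg => /eqP.
  by rewrite subr_eq0 => /eqP ->; rewrite mulKf.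
have g0 i : g i = 0.
  case: (leP 0 i) => i0.
  - have := @geometric_decay _ a (fun n : nat => g (i + n%:Z * m%:Z)) K.
    rewrite mul0r addr0; apply=> n; first by move=> Kn; apply: gK; nia.
    by rewrite g_up; [congr (_ * g _) | ]; nia.
  - have := @geometric_decay _ a^-1 (fun n : nat => g (i - n%:Z * m%:Z)) K.
    rewrite mul0r subr0; apply=> n; first by move=> Kn; apply: gK; nia.
    by rewrite g_down; [congr (_ * g _) | ]; nia.
by move=> l; rewrite vg !g0 mulr0 subr0.
Qed.

Lemma tpow0_notin_ideal : ~ N (tpow 0).
Proof.
move=> N0; have vanish : forall l, tpow 0 l = 0 :> C.
  by apply: (ideal_window_zero N0) => l Hl; rewrite /tpow; case: eqP => // E; lia.
by move: (vanish 0); rewrite /tpow eqxx => /eqP; rewrite oner_eq0.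
Qed.

(* Modulo N, t^(i+m) = a t^i with a invertible. *)
Lemma saturated_shift P : saturated P -> periodic m (fun i => P (tpow i)).
Proof.
move=> [_ Pscale Psat] i /=; split=> Pi.
- apply: (Psat _ _ (Pscale a _ Pi) (finsupp_tpow _)).
  by apply: laurent_ext (ideal_scale (-1) (ideal_binomial i)) _ => j; ring.
- apply: (Psat _ _ (Pscale a^-1 _ Pi) (finsupp_tpow _)).
  apply: laurent_ext (ideal_scale a^-1 (ideal_binomial i)) _ => j.
  by rewrite mulrBr mulKf.
Qed.

Lemma spanned_tpow i : spanned (tpow i).
Proof.
apply: (periodic_from_window m0 (saturated_shift saturated_spanned)) => -[n|n] // _ Hn.
have n_lt : (n < m)%N by lia.
exists (fun i : 'I_m => if i == Ordinal n_lt then 1 else 0).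
apply: laurent_ext ideal0 _ => j; case: (window_cases j) => [[n' ->]|Hj].
  by rewrite combo_at /tpow (ord_int_eq n' (Ordinal n_lt)) subrr.
by rewrite combo_out // /tpow (negbTE (Hj (Ordinal n_lt))) subrr.
Qed.

Lemma ideal_basis_span u : finsupp u -> spanned u.
Proof. exact: (saturated_all saturated_spanned spanned_tpow). Qed.

Lemma ideal_basis_free k : N (combo k) -> forall i, k i = 0.
Proof. by move=> Nk i; rewrite -combo_at (ideal_window_zero Nk) // => l; exact: combo_outside. Qed.

Lemma qdim_quotient : qdim N m.
Proof.
exists (fun i : 'I_m => tpow i%:Z); split=> [i|u|k]; first exact: finsupp_tpow.
  exact: ideal_basis_span.
exact: ideal_basis_free.
Qed.

End Quotient.

Section Weights.
Variables (C : numClosedFieldType) (f : {poly C}) (lam : int -> C) (m : nat).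
Hypothesis m0 : m <> 0%N.
Hypothesis Hf : in_Sf f lam.
Hypothesis Hper : lam_period lam m.

Lemma lam_period_mul l (q : int) : lam (l + q * m%:Z) = lam l.
Proof. by apply: (proj2 (Hper (q * m%:Z))); apply/dvdz_mull/dvdzz. Qed.

(* Since lam (i+1) = f (lam i), equal weights stay equal forward. *)
Lemma Sf_shift_eq i j : lam i = lam j -> forall n : nat, lam (i + n%:Z) = lam (j + n%:Z).
Proof.
move=> eq_ij; elim=> [|n IH]; first by rewrite !addr0.
by rewrite -[n.+1]addn1 PoszD !addrA -!Hf IH.
Qed.

(* ... hence, by periodicity, lam i = lam j makes j - i a period. *)
Lemma lam_coincidence_period i j : lam i = lam j ->
  forall l, lam (l + (j - i)) = lam l.
Proof.
move=> eq_ij l; pose q : int := (`|l| + `|i|)%N%:Z.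
have Hq : - l + i <= q * m%:Z by rewrite /q; nia.
have [n En] : exists n : nat, l + q * m%:Z - i = n%:Z.
  by exists (absz (l + q * m%:Z - i)%R); lia.
rewrite -(lam_period_mul (l + (j - i)) q) -(lam_period_mul l q).
have -> : l + q * m%:Z = i + n%:Z by lia.
have -> : l + (j - i) + q * m%:Z = j + n%:Z by lia.
exact: Sf_shift_eq.
Qed.

Lemma lam_window_inj (i j : 'I_m) : i != j -> lam i%:Z != lam j%:Z.
Proof.
wlog lt_ij : i j / (i < j)%N.
  move=> H ij; case: (ltngtP i j) => [lt|gt|eq]; first exact: H.
    by rewrite eq_sym; apply: H => //; rewrite eq_sym.
  by move: ij; rewrite (val_inj eq) eqxx.
move=> _; apply/eqP => /lam_coincidence_period /(proj1 (Hper _)).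
have -> : j%:Z - i%:Z = (j - i)%N%:Z by lia.
by rewrite dvdzE /= gtnNdvd //; move: (ltn_ord j); lia.
Qed.

(* The Lagrange-type product that isolates the weight of t^j. *)
Lemma eigenfilter_combo (k : 'I_m -> C) (j : 'I_m) x :
  (\prod_(i < m | i != j) (lam x - lam i%:Z)) * combo k x =
  (\prod_(i < m | i != j) (lam j%:Z - lam i%:Z)) * k j * tpow j%:Z x.
Proof.
case: (window_cases m x) => [[n ->]|Hx].
  rewrite combo_at /tpow ord_int_eq; case: (eqVneq n j) => [->|nj].
    by rewrite mulr1.
  by rewrite (bigD1 n) //= subrr !mul0r mulr0.
by rewrite combo_out // /tpow (negbTE (Hx j)) !mulr0.
Qed.

End Weights.

Section Simplicity.
Variables (C : numClosedFieldType) (f : {poly C}) (lam : int -> C) (m : nat) (a : C).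
Hypothesis m0 : m <> 0%N.
Hypothesis a0 : a != 0.
Hypothesis Hf : in_Sf f lam.
Hypothesis Hper : lam_period lam m.

Notation N := (ideal_tma m a).

Lemma qsubmodule_saturated M S : qsubmodule M N S -> saturated m a S.
Proof. by move=> [_ [_ Sadd Sscale _ Ssat]]; split=> // u v Su vf uv; exact: Ssat vf uv Su. Qed.

(* A submodule is stable under the polynomials in h, which act as the
   multiplication by polynomials in the weights. *)
Lemma submodule_eigenfilter M S : act_h M = (fun c i => lam i * c i) ->
  qsubmodule M N S -> forall v (r : seq 'I_m) (P : pred 'I_m), S v ->
  S (fun x => (\prod_(i <- r | P i) (lam x - lam i%:Z)) * v x).
Proof.
move=> Mh [_ [_ Sadd Sscale Sact _]] v r P Sv; elim: r => [|i r IH].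
  by apply: laurent_ext (Sscale 1 v Sv) _ => j; rewrite big_nil.
case Pi: (P i); last by apply: laurent_ext IH _ => x; rewrite big_cons Pi.
have [_ _] := Sact _ IH; rewrite Mh => Sh.
apply: laurent_ext (Sadd _ _ Sh (Sscale (- lam i%:Z) _ IH)) _ => x /=.
by rewrite big_cons Pi; ring.
Qed.

Lemma submodule_contains_tpow M S u : act_h M = (fun c i => lam i * c i) ->
  qsubmodule M N S -> S u -> ~ N u -> exists j, S (tpow j).
Proof.
move=> Mh HS Su NuN; have [Sfin [_ _ Sscale _ Ssat]] := HS.
have [k Nuk] := ideal_basis_span m0 a0 (Sfin _ Su).
have Sk : S (combo k) by apply: (Ssat u) => //; exact: finsupp_combo.
have [j kj] : exists j, k j != 0.
  apply: NNPP => k0; apply: NuN; apply: laurent_ext Nuk _ => x.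
  rewrite [combo k x]big1 ?subr0 // => i _.
  by case: (eqVneq (k i) 0) => [->|ki]; [rewrite mul0r | case: k0; exists i].
pose c := (\prod_(i < m | i != j) (lam j%:Z - lam i%:Z)) * k j.
have c0 : c != 0.
  rewrite mulf_neq0 //; apply/prodf_neq0 => i ij.
  by rewrite subr_eq0; apply: (lam_window_inj m0 Hf Hper); rewrite eq_sym.
exists j%:Z.
have Sfilter := submodule_eigenfilter Mh HS (index_enum 'I_m) (fun i => i != j) Sk.
apply: laurent_ext (Sscale c^-1 _ Sfilter) _ => x.
by rewrite eigenfilter_combo mulrA mulVf ?mul1r.
Qed.

Lemma simple_criterion M : act_h M = (fun c i => lam i * c i) ->
  (forall S, qsubmodule M N S -> forall j, S (tpow j) -> forall i, S (tpow i)) ->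
  qsimple M N.
Proof.
move=> Mh connected; split.
  by exists (tpow 0); split; [exact: finsupp_tpow | exact: tpow0_notin_ideal].
move=> S HS; case: (classic (forall u, S u -> N u)) => [allN | notN]; first by left.
right.
have [u uS_notN] := not_all_ex_not _ _ notN.
have [Su NuN] := imply_to_and _ _ uS_notN.
have [j Sj] := submodule_contains_tpow Mh HS Su NuN.
by apply: saturated_all (qsubmodule_saturated HS) _ => i; exact: connected HS j Sj i.
Qed.

(* In A, x t^j = t^(j+1): every monomial is reached going up. *)
Lemma A_connected zd S : qsubmodule (A_act lam zd) N S ->
  forall j, S (tpow j) -> forall i, S (tpow i).
Proof.
move=> HS j Sj; have [_ [_ _ _ Sact _]] := HS.
have up (n : nat) : S (tpow (j + n%:Z)).
  elim: n => [|n IH]; first by rewrite addr0.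
  have [Sx _ _] := Sact _ IH; apply: laurent_ext Sx _ => i /=.
  by rewrite /tpow; congr (if _ then _ else _); apply/eqP/eqP; lia.
apply: (periodic_from_above m0 (j := j) (saturated_shift a0 (qsubmodule_saturated HS))).
by move=> k jk; have -> : k = j + `|k - j|%N%:Z by lia.
Qed.

(* In B, y t^j = t^(j-1): every monomial is reached going down. *)
Lemma B_connected zd S : qsubmodule (B_act lam zd) N S ->
  forall j, S (tpow j) -> forall i, S (tpow i).
Proof.
move=> HS j Sj; have [_ [_ _ _ Sact _]] := HS.
have down (n : nat) : S (tpow (j - n%:Z)).
  elim: n => [|n IH]; first by rewrite subr0.
  have [_ Sy _] := Sact _ IH; apply: laurent_ext Sy _ => i /=.
  by rewrite /tpow; congr (if _ then _ else _); apply/eqP/eqP; lia.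
apply: (periodic_from_below m0 (j := j) (saturated_shift a0 (qsubmodule_saturated HS))).
by move=> k kj; have -> : k = j - `|j - k|%N%:Z by lia.
Qed.

End Simplicity.

Theorem lemma8 (C : numClosedFieldType) (f : {poly C}) (lam : int -> C)
    (m : nat) (zd a : C) :
  in_Sf f lam -> lam_period lam m -> m <> 0%N -> a != 0 ->
  [/\ qdim (ideal_tma m a) m, qsimple (A_act lam zd) (ideal_tma m a)
    & qsimple (B_act lam zd) (ideal_tma m a)].
Proof.
move=> Hf Hper m0 a0; split.
- exact: qdim_quotient.
- apply: (simple_criterion m0 a0 Hf Hper) => //.
  exact: A_connected m0 a0 zd.
- apply: (simple_criterion m0 a0 Hf Hper) => //.
  exact: B_connected m0 a0 zd.
Qed.
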